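(* Let $m_1,\dots,m_r,n$ be positive integers and $m=\sum_{i=1}^r m_i$. If $K_{m_1,\dots,m_r}\times K_n$ is equitably $k$-colorable for some positive integer $k<\lceil mn/(m+1)\rceil$, then $K_{m_1 n,\dots,m_r n}$ is also equitably $k$-colorable.
   Context: All graphs are finite, simple and undirected. A (proper) $k$-coloring of $G$ is a map $f:V(G)\to\{1,\dots,k\}$ with $f(x)\ne f(y)$ whenever $xy\in E(G)$; an equitable $k$-coloring is a $k$-coloring in which any two color classes $f^{-1}(i)$ differ in size by at most $1$; $G$ is equitably $k$-colorable if it has one. $K_{a_1,\dots,a_r}$ denotes the complete multipartite graph with parts of sizes $a_1,\dots,a_r$; $K_n$ is the complete graph on $n$ vertices. The Kronecker product $G\times H$ has vertex set $V(G)\times V(H)$, with $(x,y)$ adjacent to $(x',y')$ iff $xx'\in E(G)$ and $yy'\in E(H)$. *)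

From mathcomp Require Import all_boot.
Set Implicit Arguments. Unset Strict Implicit. Unset Printing Implicit Defensive.

Definition proper_coloring (T : finType) (adj : rel T) (k : nat) (f : T -> 'I_k) : Prop :=
  forall x y : T, adj x y -> f x != f y.

Definition equitable (T : finType) (k : nat) (f : T -> 'I_k) : Prop :=
  forall i j : 'I_k, #|[set x | f x == i]| <= #|[set x | f x == j]|.+1.

Definition equitably_colorable (T : finType) (adj : rel T) (k : nat) : Prop :=
  exists f : T -> 'I_k, proper_coloring adj f /\ equitable f.

(* Complete multipartite graph K_{a_1,...,a_r}: vertices (i, j) with j < a i,
   adjacent iff they lie in different parts. *)
Definition multipartite_vertex (r : nat) (a : 'I_r -> nat) : finType :=
  {i : 'I_r & 'I_(a i)}.

Definition multipartite_adj (r : nat) (a : 'I_r -> nat) : rel (multipartite_vertex a) :=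
  fun x y => tag x != tag y.

Definition complete_adj (n : nat) : rel 'I_n := fun x y => x != y.

Definition kron_adj (T U : finType) (e1 : rel T) (e2 : rel U) : rel (T * U)%type :=
  fun x y => e1 x.1 y.1 && e2 x.2 y.2.

From mathcomp Require Import all_boot.
From mathcomp Require Import zify.
Set Implicit Arguments. Unset Strict Implicit. Unset Printing Implicit Defensive.

(* Let f be an equitable proper k-coloring of G = K_{m_1..m_r} x K_n,
   which has M*n vertices, M = m_1 + ... + m_r.
   1. Since k*(M+1) < M*n, equitability forces every color class to have
      more than M vertices (otherwise all classes have at most M+1 vertices).
   2. In G, a color class meeting two different parts (x, j), (y, j') must have
      j = j', and then the whole class lies in the "row" {(z, j)}, of size M.
      Hence every color class of f lies inside a single part i x 'I_n.
   3. The vertex set of K_{m_1 n,..,m_r n} is in part-preserving bijection with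
      V(K_{m_1..m_r}) x 'I_n (write t < m_i n as t = a*n + j).  Composing f with
      this bijection gives a proper coloring, by 2, with the same class sizes,
      hence still equitable. *)

Definition color_class (T : finType) (k : nat) (f : T -> 'I_k) (c : 'I_k) : {set T} :=
  [set x | f x == c].

Lemma sum_card_color_class (T : finType) (k : nat) (f : T -> 'I_k) :
  \sum_(c < k) #|color_class f c| = #|T|.
Proof.
rewrite -sum1_card (partition_big f xpredT) //.
by apply: eq_bigr => c _; rewrite -sum1_card; apply: eq_bigl => x; rewrite inE.
Qed.

(* If an equitable k-coloring has a class of size at most M, then all classes
   have size at most M+1, so there are at most k*(M+1) vertices. *)
Lemma equitable_large_classes (T : finType) (k M : nat) (f : T -> 'I_k) :
  equitable f -> k * M.+1 < #|T| -> forall c, M < #|color_class f c|.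
Proof.
move=> feq hT c0; rewrite ltnNge; apply/negP => small.
suff : #|T| <= k * M.+1 by rewrite leqNgt hT.
rewrite -(sum_card_color_class f) -[k in k * _]card_ord -sum_nat_const.
by apply: leq_sum => c _; apply: leq_trans (feq c c0) _.
Qed.

Lemma equitable_comp_bij (T U : finType) (k : nat) (f : U -> 'I_k) (g : T -> U) :
  bijective g -> equitable f -> equitable (f \o g).
Proof.
move=> [h gK hK] feq i j.
have card_class c : #|color_class (f \o g) c| = #|color_class f c|.
  have -> : color_class (f \o g) c = g @^-1: color_class f c.
    by apply/setP => x; rewrite !inE.
  by rewrite -(can2_imset_pre _ hK gK) card_imset //; apply: can_inj hK.
by have := feq i j; rewrite /color_class -!card_class.
Qed.

Lemma card_multipartite_vertex (r : nat) (a : 'I_r -> nat) :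
  #|{: multipartite_vertex a}| = \sum_(i < r) a i.
Proof.
rewrite /multipartite_vertex card_tagged sumnE big_map big_enum /=.
by apply: eq_bigr => i _; rewrite card_ord.
Qed.

Section KroneckerClasses.
Variables (r n k : nat) (m : 'I_r -> nat).
Let V := (multipartite_vertex m * 'I_n)%type.
Let adjV := kron_adj (@multipartite_adj r m) (@complete_adj n).
Variables (f : V -> 'I_k) (f_proper : proper_coloring adjV f).

Lemma same_color_other_row (u w : V) :
  f u = f w -> u.2 != w.2 -> tag u.1 = tag w.1.
Proof.
move=> fuw rows_uw; apply/eqP; apply: contraT => parts_uw.
have := f_proper (x := u) (y := w).
rewrite /adjV /kron_adj /multipartite_adj /complete_adj /=.
by rewrite parts_uw rows_uw fuw eqxx => /(_ isT).
Qed.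

Lemma class_in_row (u v : V) :
  f u = f v -> tag u.1 != tag v.1 ->
  color_class f (f u) \subset [set (y, u.2) | y : multipartite_vertex m].
Proof.
move=> fuv tuv.
have same_row : u.2 = v.2.
  apply/eqP; apply: contraT => rows_uv.
  by rewrite (same_color_other_row fuv rows_uv) eqxx in tuv.
apply/subsetP => w; rewrite inE => /eqP fw.
case: (eqVneq w.2 u.2) => [wu|wu].
  by apply/imsetP; exists w.1 => //; case: w fw wu => /= a b _ ->.
have tu := same_color_other_row fw wu.
rewrite same_row in wu; have tv := same_color_other_row (etrans fw fuv) wu.
by rewrite -tu tv eqxx in tuv.
Qed.

Lemma large_class_one_part (u v : V) :
  f u = f v -> \sum_(i < r) m i < #|color_class f (f u)| -> tag u.1 = tag v.1.
Proof.
move=> fuv large; apply/eqP; apply: contraT => tuv.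
have := leq_trans (subset_leq_card (class_in_row fuv tuv)) (leq_imset_card _ _).
move/leq_trans/(_ (max_card _)); rewrite card_multipartite_vertex.
by rewrite leqNgt large.
Qed.

End KroneckerClasses.

Section BlowUp.
Variables (r n : nat) (m : 'I_r -> nat) (n_gt0 : 0 < n).

Let W := multipartite_vertex (fun i => m i * n).
Let V := (multipartite_vertex m * 'I_n)%type.

Lemma blowup_div_lt i (t : 'I_(m i * n)) : t %/ n < m i.
Proof. by rewrite ltn_divLR. Qed.

Lemma blowup_index_lt i (a : 'I_(m i)) (j : 'I_n) : a * n + j < m i * n.
Proof. have := ltn_ord a; have := ltn_ord j; nia. Qed.

Definition blowup_split (x : W) : V :=
  let: existT i t := x in
  (existT (fun i => 'I_(m i)) i (Ordinal (blowup_div_lt t)), Ordinal (ltn_pmod t n_gt0)).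

Definition blowup_merge (y : V) : W :=
  let: (existT i a, j) := y in
  existT (fun i => 'I_(m i * n)) i (Ordinal (blowup_index_lt a j)).

Lemma blowup_splitK : cancel blowup_split blowup_merge.
Proof.
by case=> i t /=; congr existT; apply: val_inj => /=; rewrite -divn_eq.
Qed.

Lemma blowup_mergeK : cancel blowup_merge blowup_split.
Proof.
case=> [[i a] j] /=; congr (_, _); last first.
  by apply: val_inj => /=; rewrite modnMDl modn_small.
congr existT; apply: val_inj => /=.
by rewrite divnMDl // divn_small ?addn0.
Qed.

Lemma blowup_split_bij : bijective blowup_split.
Proof. exact: Bijective blowup_splitK blowup_mergeK. Qed.

Lemma tag_blowup_split (x : W) : tag (blowup_split x).1 = tag x.
Proof. by case: x. Qed.

End BlowUp.

Theorem lemma3p1 (r n k : nat) (m : 'I_r -> nat) :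
  0 < r -> (forall i, 0 < m i) -> 0 < n -> 0 < k ->
  let M := \sum_(i < r) m i in
  (* k < ceil (M n / (M+1)) *)
  k < (M * n + M) %/ (M + 1) ->
  equitably_colorable
    (kron_adj (@multipartite_adj r m) (@complete_adj n)) k ->
  equitably_colorable (@multipartite_adj r (fun i => m i * n)) k.
Proof.
move=> _ _ n_gt0 _ M hk [f [f_proper f_eq]].
have few_colors : k * M.+1 < #|{: multipartite_vertex m * 'I_n}|.
  rewrite card_prod card_multipartite_vertex card_ord -/M.
  by move: hk; rewrite leq_divRL ?addn1 //; nia.
have large := equitable_large_classes f_eq few_colors.
exists (f \o blowup_split n_gt0); split; last first.
  exact: equitable_comp_bij (blowup_split_bij _ n_gt0) f_eq.
move=> x y; apply: contra => /eqP same_color.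
rewrite -(tag_blowup_split n_gt0 x) -(tag_blowup_split n_gt0 y).
by rewrite (large_class_one_part f_proper same_color (large _)).
Qed.
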